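(* Let $\mathcal N$ be an indecomposable Clifford Nil-algebra of rank $4$ with nilpotency index $NI(\mathcal N)=1$. Then $\mathcal N$ is equivalent either to one of the following quasiNil-algebras, or to the dual of one of them: (i) $\mathcal N_{12}=V_1$, $\mathcal N_{13}=V_2$, $\mathcal N_{14}=V_3$, all other $\mathcal N_{ij}=0$; (ii) $\mathcal N_{13}=V_1$, $\mathcal N_{14}=V_2$, $\mathcal N_{24}=V_3$, all other $\mathcal N_{ij}=0$; (iii) $\mathcal N_{13}=V_1$, $\mathcal N_{14}=V_2$, $\mathcal N_{23}=V_3$, $\mathcal N_{24}=V_4$, all other $\mathcal N_{ij}=0$. Here $V_1,\dots,V_4$ are arbitrary nonzero Euclidean spaces and all products $\mu_{ijk}$ are zero. Conversely, each of (i)–(iii) is an indecomposable Clifford Nil-algebra of rank 4 with $NI=1$.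
   Context: All vector spaces are finite-dimensional real. A bilinear map $\mu:X\times Y\to Z$ of Euclidean spaces is isometric if $|\mu(x,y)|=|x|\,|y|$. For a Euclidean space $V$, $\mathrm{Cl}(V)$ is the Clifford algebra with $v\cdot v=-|v|^2$. A ''$\mathrm{Cl}(V)$-module $S^0\oplus S^1$'' always means a $\mathbb Z/2$-graded $\mathrm{Cl}(V)$-module ($V\cdot S^0\subset S^1$, $V\cdot S^1\subset S^0$) with an admissible Euclidean metric: $S^0\perp S^1$ and every $v\in V$ acts skew-symmetrically (so $|v\cdot s|=|v||s|$); the maps $V\times S^0\to S^1,(v,s)\mapsto v\cdot s$ and $S^0\times V\to S^1,(s,v)\mapsto v\cdot s$ are called Clifford multiplications. A quasiNil-algebra of rank $n$ is a Euclidean space $\mathcal N$ with an orthogonal decomposition $\mathcal N=\bigoplus_{1\le i<j\le n}\mathcal N_{ij}$ and bilinear isometric maps $\mu_{ijk}:\mathcal N_{ij}\times\mathcal N_{jk}\to\mathcal N_{ik}$ ($i<j<k$; $\mu_{ijk}=0$ iff one factor is $0$); elements are strictly upper triangular matrices $A=(a_{ij})$, $a_{ij}\in\mathcal N_{ij}$, with product $(AB)_{ik}=\sum_{i<j<k}\mu_{ijk}(a_{ij},b_{jk})$. It is Clifford if every nonzero $\mu_{ijk}$ is a Clifford multiplication (either $\mathcal N_{jk}\oplus\mathcal N_{ik}$ is a $\mathrm{Cl}(\mathcal N_{ij})$-module with $\mu_{ijk}(x,y)=x\cdot y$, or $\mathcal N_{ij}\oplus\mathcal N_{ik}$ is a $\mathrm{Cl}(\mathcal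 N_{jk})$-module with $\mu_{ijk}(x,y)=y\cdot x$). A Nil-algebra is an associative quasiNil-algebra satisfying the Vinberg condition: for all $l<i<j<k$, $a\in\mathcal N_{ik}$, $b\in\mathcal N_{jk}$, if $\langle a,\mu_{ijk}(x,b)\rangle=0$ for all $x\in\mathcal N_{ij}$ then $\langle\mu_{lik}(y,a),\mu_{ljk}(z,b)\rangle=0$ for all $y\in\mathcal N_{li},z\in\mathcal N_{lj}$. The nilpotency index $NI(\mathcal N)$ is the largest $m$ such that there are $i_0<i_1<\dots<i_m$ with $\mathcal N_{i_{r-1}i_r}\neq0$ for all $r$. An isomorphism is a linear isometry preserving each $\mathcal N_{ij}$ and all products. A renumbering by a permutation $\sigma$ with $\sigma(i)<\sigma(j)$ whenever $\mathcal N_{ij}\ne0$ sets $\mathcal N'_{\sigma(i)\sigma(j)}=\mathcal N_{ij}$ with the transported products; two quasiNil-algebras are equivalent if they are isomorphic after a renumbering. The dual $\mathcal N^\tau$ has $\mathcal N^\tau_{ij}=\mathcal N_{n+1-j,\,n+1-i}$ and $\mu^\tau_{ijk}(x,y)=\mu_{n+1-k,\,n+1-j,\,n+1-i}(y,x)$. A direct sum of quasiNil-algebras of ranks $n',n''$ is the rank $n'+n''$ block-diagonal quasiNil-algebra; $\mathcal N$ is indecomposable if it is not equivalent to a direct sum of two quasiNil-algebras of positive rank. *)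

(* Euclidean spaces are modelled as 'rV[R]_d with the standard
   inner product, R : realType (the real numbers). *)
From HB Require Import structures.
From mathcomp Require Import all_boot all_order all_algebra.
From mathcomp Require Import reals.
Set Implicit Arguments. Unset Strict Implicit. Unset Printing Implicit Defensive.
Import Order.TTheory GRing.Theory Num.Theory.

Section QNil.
Variable R : realType.
Local Open Scope ring_scope.

Definition dotv (d : nat) (x y : 'rV[R]_d) : R := (x *m y^T) 0 0.
Definition normv (d : nat) (x : 'rV[R]_d) : R := Num.sqrt (dotv x x).

Definition bilinear_map (a b c : nat)
  (m : 'rV[R]_a -> 'rV[R]_b -> 'rV[R]_c) : Prop :=
  (forall (t : R) x x' y, m (t *: x + x') y = t *: m x y + m x' y) /\
  (forall (t : R) x y y', m x (t *: y + y') = t *: m x y + m x y').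

Definition isometric_map (a b c : nat)
  (m : 'rV[R]_a -> 'rV[R]_b -> 'rV[R]_c) : Prop :=
  forall x y, normv (m x y) = normv x * normv y.

Definition zero_map (a b c : nat) (m : 'rV[R]_a -> 'rV[R]_b -> 'rV[R]_c) : Prop :=
  forall x y, m x y = 0.

(* m : V x S0 -> S1 is a Clifford multiplication: S0 (+) S1 (orthogonal sum of
   the given Euclidean spaces) is a Z/2-graded Cl(V)-module with admissible
   metric whose odd part V x S0 -> S1 is m.  The action of v on S0 (+) S1 is
   (s, t) |-> (nu v t, m v s); the module condition is v.v = -|v|^2, and
   admissibility is skew-symmetry of each v. *)
Definition clifford_mult (a b c : nat)
  (m : 'rV[R]_a -> 'rV[R]_b -> 'rV[R]_c) : Prop :=
  bilinear_map m /\
  exists nu : 'rV[R]_a -> 'rV[R]_c -> 'rV[R]_b,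
    bilinear_map nu /\
    (forall v s, nu v (m v s) = - (dotv v v) *: s) /\
    (forall v t, m v (nu v t) = - (dotv v v) *: t) /\
    (forall v s t, dotv (m v s) t = - dotv s (nu v t)).

(* Data of a (candidate) quasiNil-algebra of rank n: the spaces N_ij = R^(qdim i j)
   (indices 0..n-1) and the products mu_ijk. *)
Record qn_data (n : nat) := QN {
  qdim : 'I_n -> 'I_n -> nat;
  qmu : forall i j k : 'I_n,
          'rV[R]_(qdim i j) -> 'rV[R]_(qdim j k) -> 'rV[R]_(qdim i k) }.
Arguments qdim {n} q i j : rename.
Arguments qmu {n} q i j k : rename.

Definition is_quasiNil n (N : qn_data n) : Prop :=
  (forall i j : 'I_n, ~~ (i < j)%N -> qdim N i j = 0%N) /\
  (forall i j k : 'I_n, (i < j)%N -> (j < k)%N ->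
     [/\ bilinear_map (qmu N i j k), isometric_map (qmu N i j k) &
         (zero_map (qmu N i j k) <-> (qdim N i j = 0%N \/ qdim N j k = 0%N))]).

Definition is_clifford n (N : qn_data n) : Prop :=
  forall i j k : 'I_n, (i < j)%N -> (j < k)%N -> ~ zero_map (qmu N i j k) ->
    clifford_mult (qmu N i j k) \/ clifford_mult (fun y x => qmu N i j k x y).

(* elements: strictly upper triangular matrices A = (a_ij), a_ij in N_ij *)
Definition qn_elt n (N : qn_data n) := forall i j : 'I_n, 'rV[R]_(qdim N i j).

Definition qn_mul n (N : qn_data n) (A B : qn_elt N) : qn_elt N :=
  fun i k => \sum_(j < n | (i < j < k)%N) qmu N i j k (A i j) (B j k).

Definition is_associative n (N : qn_data n) : Prop :=
  forall (A B C : qn_elt N) (i k : 'I_n),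
    qn_mul (qn_mul A B) C i k = qn_mul A (qn_mul B C) i k.

Definition vinberg n (N : qn_data n) : Prop :=
  forall l i j k : 'I_n, (l < i)%N -> (i < j)%N -> (j < k)%N ->
  forall (a : 'rV[R]_(qdim N i k)) (b : 'rV[R]_(qdim N j k)),
    (forall x : 'rV[R]_(qdim N i j), dotv a (qmu N i j k x b) = 0) ->
    forall (y : 'rV[R]_(qdim N l i)) (z : 'rV[R]_(qdim N l j)),
      dotv (qmu N l i k y a) (qmu N l j k z b) = 0.

Definition is_Nil n (N : qn_data n) : Prop :=
  is_quasiNil N /\ is_associative N /\ vinberg N.

Definition is_clifford_Nil n (N : qn_data n) : Prop :=
  is_Nil N /\ is_clifford N.

Definition has_chain n (N : qn_data n) (m : nat) : Prop :=
  exists s : nat -> 'I_n,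
    forall r, (r < m)%N -> (s r < s r.+1)%N /\ (0 < qdim N (s r) (s r.+1))%N.

Definition NI_is n (N : qn_data n) (m : nat) : Prop :=
  has_chain N m /\ forall m', has_chain N m' -> (m' <= m)%N.

Definition linear_fun (a b : nat) (f : 'rV[R]_a -> 'rV[R]_b) : Prop :=
  forall (t : R) x y, f (t *: x + y) = t *: f x + f y.

Definition qn_equiv n m (N : qn_data n) (N' : qn_data m) : Prop :=
  exists sigma : 'I_n -> 'I_m,
    [/\ bijective sigma,
        (forall i j : 'I_n, (0 < qdim N i j)%N -> (sigma i < sigma j)%N) &
        exists phi : forall i j : 'I_n,
            'rV[R]_(qdim N i j) -> 'rV[R]_(qdim N' (sigma i) (sigma j)),
          [/\ (forall i j : 'I_n, linear_fun (phi i j)),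
              (forall i j : 'I_n, bijective (phi i j)),
              (forall (i j : 'I_n) x, normv (phi i j x) = normv x) &
              (forall i j k : 'I_n, (i < j)%N -> (j < k)%N ->
                 (sigma i < sigma j)%N -> (sigma j < sigma k)%N ->
                 forall x y, phi i k (qmu N i j k x y) =
                   qmu N' (sigma i) (sigma j) (sigma k) (phi i j x) (phi j k y))]].

Definition qn_dual n (N : qn_data n) : qn_data n :=
  @QN n (fun i j => qdim N (rev_ord j) (rev_ord i))
        (fun i j k x y => qmu N (rev_ord k) (rev_ord j) (rev_ord i) y x).

Section DSum.
Variables (n1 n2 : nat) (N1 : qn_data n1) (N2 : qn_data n2).

Definition dsum_dim (a b : 'I_n1 + 'I_n2) : nat :=
  match a, b with
  | inl x, inl y => qdim N1 x y
  | inr x, inr y => qdim N2 x y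
  | _, _ => 0%N
  end.

Definition dsum_mu (a b c : 'I_n1 + 'I_n2) :
  'rV[R]_(dsum_dim a b) -> 'rV[R]_(dsum_dim b c) -> 'rV[R]_(dsum_dim a c) :=
  match a as a', b as b', c as c'
    return 'rV[R]_(dsum_dim a' b') -> 'rV[R]_(dsum_dim b' c') ->
           'rV[R]_(dsum_dim a' c') with
  | inl x, inl y, inl z => qmu N1 x y z
  | inr x, inr y, inr z => qmu N2 x y z
  | _, _, _ => fun _ _ => 0
  end.

Definition qn_dsum : qn_data (n1 + n2) :=
  @QN (n1 + n2) (fun i j => dsum_dim (split i) (split j))
      (fun i j k => @dsum_mu (split i) (split j) (split k)).
End DSum.

Definition indecomposable n (N : qn_data n) : Prop :=
  ~ exists n1 n2 (N1 : qn_data n1) (N2 : qn_data n2),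
      [/\ (0 < n1)%N, (0 < n2)%N, is_quasiNil N1, is_quasiNil N2 &
          qn_equiv N (qn_dsum N1 N2)].

(* the three model algebras of rank 4 (0-based indices: N_12 is (0,1), etc.),
   all products zero *)
Definition zero_mu (d : 'I_4 -> 'I_4 -> nat) :=
  fun (i j k : 'I_4) (_ : 'rV[R]_(d i j)) (_ : 'rV[R]_(d j k)) => (0 : 'rV[R]_(d i k)).

Definition dim_i (d1 d2 d3 : nat) (i j : 'I_4) : nat :=
  match nat_of_ord i, nat_of_ord j with
  | 0, 1 => d1 | 0, 2 => d2 | 0, 3 => d3 | _, _ => 0 end%N.
Definition dim_ii (d1 d2 d3 : nat) (i j : 'I_4) : nat :=
  match nat_of_ord i, nat_of_ord j with
  | 0, 2 => d1 | 0, 3 => d2 | 1, 3 => d3 | _, _ => 0 end%N.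
Definition dim_iii (d1 d2 d3 d4 : nat) (i j : 'I_4) : nat :=
  match nat_of_ord i, nat_of_ord j with
  | 0, 2 => d1 | 0, 3 => d2 | 1, 2 => d3 | 1, 3 => d4 | _, _ => 0 end%N.

Definition model_i d1 d2 d3 : qn_data 4 :=
  @QN 4 (dim_i d1 d2 d3) (@zero_mu (dim_i d1 d2 d3)).
Definition model_ii d1 d2 d3 : qn_data 4 :=
  @QN 4 (dim_ii d1 d2 d3) (@zero_mu (dim_ii d1 d2 d3)).
Definition model_iii d1 d2 d3 d4 : qn_data 4 :=
  @QN 4 (dim_iii d1 d2 d3 d4) (@zero_mu (dim_iii d1 d2 d3 d4)).

End QNil.

From HB Require Import structures.
From mathcomp Require Import all_boot all_order all_algebra.
From mathcomp Require Import reals.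
Set Implicit Arguments. Unset Strict Implicit. Unset Printing Implicit Defensive.
Import Order.TTheory GRing.Theory Num.Theory.

(* With NI = 1 no nonzero block N_ij is followed by a nonzero block N_jk, so
   every product vanishes: associativity, the Vinberg condition and the
   Clifford condition hold trivially, and an equivalence is just a renumbering
   preserving the block dimensions.  Such an algebra splits as a direct sum
   along any partition of the indices crossed by no nonzero block, so it is
   indecomposable exactly when the graph of its nonzero blocks is connected.
   On four vertices, running through the 64 patterns of nonzero blocks shows
   that the connected graphs without a path of length two are the star out of
   a vertex, the star into a vertex, the square and the paths; each of these
   is a renumbering of a model or of its dual. *)

Lemma ltn_enum_val n (A : {pred 'I_n}) :
  {mono @Order.enum_val _ _ A : r s / (r < s)%N}.
Proof.
by move=> r s; have := leW_mono (@Order.le_enum_val _ _ le_total A) r s; rewrite !ltEord.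
Qed.

Lemma ltn_enum_rank_in n (i0 : 'I_n) (A : {pred 'I_n}) (Ai0 : i0 \in A) :
  {in A &, {mono Order.enum_rank_in Ai0 : i j / (i < j)%N}}.
Proof.
move=> i j Ai Aj.
by have := leW_mono_in (Order.le_enum_rank_in le_total Ai0) Ai Aj; rewrite !ltEord.
Qed.

Section QuasiNil.
Variable R : realType.

Section Vectors.
Local Open Scope ring_scope.

Lemma dotv0l d (y : 'rV[R]_d) : dotv 0 y = 0.
Proof. by rewrite /dotv mul0mx mxE. Qed.

Lemma normv0 d : normv (0 : 'rV[R]_d) = 0.
Proof. by rewrite /normv dotv0l sqrtr0. Qed.

Lemma normv_dim0 d (x : 'rV[R]_d) : d = 0%N -> normv x = 0.
Proof. by move=> d0; move: x; rewrite d0 => x; rewrite (thinmx0 x) normv0. Qed.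

Lemma bijective_rV_dim_gt0 d e (f : 'rV[R]_d -> 'rV[R]_e) :
  bijective f -> (0 < d)%N -> (0 < e)%N.
Proof.
case: e f => [|e] // f [g fK _] d_gt0.
have : (0 : 'rV[R]_d) = const_mx 1.
  by rewrite -[LHS]fK -[RHS]fK (thinmx0 (f 0)) (thinmx0 (f (const_mx 1))).
move/matrixP => /(_ 0 (Ordinal d_gt0)); rewrite !mxE => /eqP.
by rewrite eq_sym oner_eq0.
Qed.

End Vectors.

Definition upper_triangular n (N : qn_data R n) :=
  forall i j : 'I_n, ~~ (i < j)%N -> qdim N i j = 0%N.

Definition composition_free n (N : qn_data R n) :=
  forall i j k : 'I_n, (i < j)%N -> (j < k)%N ->
    (0 < qdim N i j)%N -> (0 < qdim N j k)%N -> False.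

Definition zero_products n (N : qn_data R n) :=
  forall (i j k : 'I_n) x y, (i < j)%N -> (j < k)%N -> @qmu _ _ N i j k x y = 0%R.

Definition connected n (N : qn_data R n) :=
  forall P : pred 'I_n, (forall i j, (0 < qdim N i j)%N -> P i = P j) ->
    forall i j, P i = P j.

Section ZeroProducts.
Variables (n : nat) (N : qn_data R n).
Hypotheses (Nup : upper_triangular N) (Nfree : composition_free N)
  (N0 : zero_products N).

Lemma zero_products_quasiNil : is_quasiNil N.
Proof.
split=> // i j k ij jk.
have zmu : zero_map (@qmu _ _ N i j k) by move=> x y; apply: N0.
have dim0 : qdim N i j = 0%N \/ qdim N j k = 0%N.
  case: (posnP (qdim N i j)) => [|Pij]; first by left.
  case: (posnP (qdim N j k)) => [|Pjk]; first by right.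
  by case: (Nfree ij jk Pij Pjk).
split=> //.
- by split=> *; rewrite !zmu scaler0 addr0.
- move=> x y; rewrite zmu normv0.
  by case: dim0 => d0; rewrite (normv_dim0 _ d0) ?mul0r ?mulr0.
Qed.

Lemma zero_products_clifford_Nil : is_clifford_Nil N.
Proof.
have mul0 (A B : qn_elt N) i k : qn_mul A B i k = 0%R.
  by rewrite /qn_mul big1 // => j /andP[ij jk]; apply: N0.
split; [split; [exact: zero_products_quasiNil | split] |].
- by move=> A B C i k; rewrite !mul0.
- move=> l i j k li ij jk a b _ y z.
  by rewrite (N0 _ _ li (ltn_trans ij jk)) dotv0l.
- by move=> i j k ij jk nz; case: nz => x y; apply: N0.
Qed.

End ZeroProducts.

Lemma quasiNil_zero_products n (N : qn_data R n) :
  is_quasiNil N -> composition_free N -> zero_products N.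
Proof.
move=> [_ Nmu] Nfree i j k x y ij jk; have [_ _ [_ ->]] := Nmu i j k ij jk => //.
case: (posnP (qdim N i j)) => [|Pij]; first by left.
case: (posnP (qdim N j k)) => [|Pjk]; first by right.
by case: (Nfree _ _ _ ij jk Pij Pjk).
Qed.

Lemma NI1P n (N : qn_data R n) : upper_triangular N ->
  NI_is N 1 <-> composition_free N /\ exists i j, (0 < qdim N i j)%N.
Proof.
move=> Nup; split.
- move=> [[s chain] maxNI]; split; last by have [_ ?] := chain 0%N isT; eauto.
  move=> i j k ij jk Pij Pjk; have : (2 <= 1)%N => //; apply: maxNI.
  by exists (fun r => if r is 0 then i else if r is 1 then j else k) => -[|[|]].
- move=> [Nfree [i [j Pij]]]; split.
    exists (fun r => if r is 0 then i else j) => -[|] // _; split=> //.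
    by apply: contraLR Pij => /Nup ->.
  move=> [|[|m]] // [s chain]; have [s01 P01] := chain 0%N isT.
  by have [s12 P12] := chain 1%N isT; case: (Nfree _ _ _ s01 s12 P01 P12).
Qed.

Definition rcast a b (e : a = b) (x : 'rV[R]_a) : 'rV[R]_b := castmx (erefl 1%N, e) x.

Lemma rcast_linear a b (e : a = b) : linear_fun (rcast e).
Proof. by case: b / e => t x y; rewrite /rcast !castmx_id. Qed.

Lemma rcast_bij a b (e : a = b) : bijective (rcast e).
Proof. by case: b / e; exists id => x; rewrite /rcast castmx_id. Qed.

Lemma normv_rcast a b (e : a = b) x : normv (rcast e x) = normv x.
Proof. by case: b / e; rewrite /rcast castmx_id. Qed.

Lemma rcast0 a b (e : a = b) : rcast e 0 = 0%R.
Proof. by case: b / e; rewrite /rcast castmx_id. Qed.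

Lemma zero_products_equiv n m (N : qn_data R n) (M : qn_data R m)
    (sigma : 'I_n -> 'I_m) :
  bijective sigma -> zero_products N ->
  (forall i j k x y, @qmu _ _ M i j k x y = 0%R) ->
  (forall i j, qdim N i j = qdim M (sigma i) (sigma j)) ->
  (forall i j, (0 < qdim N i j)%N -> (sigma i < sigma j)%N) ->
  qn_equiv N M.
Proof.
move=> sigma_bij N0 M0 dimE sigma_mono; exists sigma; split=> //.
exists (fun i j => rcast (dimE i j)); split.
- by move=> i j; apply: rcast_linear.
- by move=> i j; apply: rcast_bij.
- by move=> i j x; apply: normv_rcast.
- by move=> i j k ij jk _ _ x y; rewrite N0 // M0 rcast0.
Qed.

Lemma connected_indecomposable n (N : qn_data R n) :
  connected N -> indecomposable N.
Proof.
move=> Nconn [n1 [n2 [N1 [N2 [n1_gt0 n2_gt0 _ _ [sigma [[tau sigmaK tauK] _]]]]]]].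
move=> [phi [_ phi_bij _ _]].
pose left_block k : bool := if split (sigma k) is inl _ then true else false.
have : left_block (tau (lshift n2 (Ordinal n1_gt0))) =
       left_block (tau (rshift n1 (Ordinal n2_gt0))).
  apply: Nconn => i j /(bijective_rV_dim_gt0 (phi_bij i j)) /=.
  by rewrite /left_block; case: (split (sigma i)); case: (split (sigma j)).
by rewrite /left_block !tauK (unsplitK (inl _)) (unsplitK (inr _)).
Qed.

Section Decomposition.
Variables (n : nat) (N : qn_data R n).
Hypotheses (Nup : upper_triangular N) (Nfree : composition_free N)
  (N0 : zero_products N).

Definition restriction k (a : 'I_k -> 'I_n) : qn_data R k :=
  @QN R k (fun r s => qdim N (a r) (a s)) (fun _ _ _ _ _ => 0%R).

Lemma restriction_quasiNil k (a : 'I_k -> 'I_n) :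
  {mono a : r s / (r < s)%N} -> is_quasiNil (restriction a).
Proof.
move=> a_mono; apply: zero_products_quasiNil => //.
- by move=> r s; rewrite -a_mono => /Nup.
- by move=> r s t rs st; apply: Nfree; rewrite a_mono.
Qed.

(* A subset of indices closed under the nonzero blocks splits N as a direct sum
   of its restrictions to the subset and to the complement, both enumerated in
   increasing order. *)
Lemma indecomposable_connected : indecomposable N -> connected N.
Proof.
move=> Nindec P P_closed.
suff no_cut i j : P i -> ~~ P j -> False.
  move=> i j; case Pi: (P i); case Pj: (P j) => //.
  - by case: (no_cut i j); rewrite ?Pi ?Pj.
  - by case: (no_cut j i); rewrite ?Pi ?Pj.
move=> Pi nPj; apply: Nindec.
have PCj : j \in predC P by [].
pose a := @Order.enum_val _ _ P; pose b := @Order.enum_val _ _ (predC P).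
pose sigma k := unsplit (if P k then inl (Order.enum_rank_in Pi k)
                        else inr (Order.enum_rank_in PCj k)).
pose tau k := match split k with inl r => a r | inr s => b s end.
exists #|P|, #|predC P|, (restriction a), (restriction b); split.
- by apply/card_gt0P; exists i.
- by apply/card_gt0P; exists j.
- exact/restriction_quasiNil/ltn_enum_val.
- exact/restriction_quasiNil/ltn_enum_val.
apply: (@zero_products_equiv _ _ _ _ sigma) => //.
- exists tau => k; rewrite /sigma /tau.
    by case: ifP => Pk; rewrite unsplitK /a /b Order.enum_rankK_in // inE Pk.
  rewrite -[RHS]splitK /tau; case: (split k) => r; rewrite /sigma /a /b.
    by rewrite (Order.enum_valP r : P _) Order.enum_valK_in.
  by rewrite (negbTE (Order.enum_valP r : ~~ P _)) Order.enum_valK_in.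
- by move=> k l m /=; case: (split k) => ?; case: (split l) => ?; case: (split m).
- move=> k l; rewrite /sigma /= !unsplitK.
  case: ifP => Pk; case: ifP => Pl /=; rewrite /a /b ?Order.enum_rankK_in ?inE ?Pk ?Pl //;
  by case: (posnP (qdim N k l)) => // /P_closed; rewrite Pk Pl.
- move=> k l Pkl; have kl : (k < l)%N by apply: contraLR Pkl => /Nup ->.
  have := P_closed k l Pkl; rewrite /sigma; case: ifP => Pk; case: ifP => Pl //= _.
    by rewrite ltn_enum_rank_in.
  by rewrite ltn_add2l ltn_enum_rank_in // inE ?Pk ?Pl.
Qed.
End Decomposition.

Lemma zero_products_props n (M : qn_data R n) :
  upper_triangular M -> composition_free M -> zero_products M -> connected M ->
  (exists i j, (0 < qdim M i j)%N) ->
  is_clifford_Nil M /\ indecomposable M /\ NI_is M 1.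
Proof.
move=> Mup Mfree M0 Mconn Medge; split; first exact: zero_products_clifford_Nil.
by split; [exact: connected_indecomposable | apply/(NI1P Mup)].
Qed.

Lemma support_dim0 n (N : qn_data R n) (e : rel 'I_n) :
  (forall i j, (0 < qdim N i j)%N = e i j) -> forall i j, e i j = false -> qdim N i j = 0%N.
Proof. by move=> Ne i j; rewrite -Ne lt0n => /negbFE/eqP. Qed.

End QuasiNil.

Definition o0 : 'I_4 := @Ordinal 4 0 isT.
Definition o1 : 'I_4 := @Ordinal 4 1 isT.
Definition o2 : 'I_4 := @Ordinal 4 2 isT.
Definition o3 : 'I_4 := @Ordinal 4 3 isT.

Lemma ord4_cases (P : 'I_4 -> Prop) : P o0 -> P o1 -> P o2 -> P o3 -> forall i, P i.
Proof.
move=> P0 P1 P2 P3 [[|[|[|[|m]]]] lt_i4] //;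
by rewrite (bool_irrelevance lt_i4 isT).
Qed.

Ltac o4 := let i := fresh "i" in intro i; pattern i; revert i; apply: ord4_cases.

Definition o_of (k : nat) : 'I_4 := match k with 0 => o0 | 1 => o1 | 2 => o2 | _ => o3 end.
Definition perm4 (l : seq nat) (i : 'I_4) : 'I_4 := o_of (nth 0 l i).

Definition ord4 : seq 'I_4 := [:: o0; o1; o2; o3].
Lemma mem_ord4 (i : 'I_4) : i \in ord4.
Proof. by case: i => [[|[|[|[|m]]]] ?]. Qed.

Fixpoint bool_seqs (n : nat) : seq (seq bool) :=
  if n is n'.+1 then [seq b :: s | b <- [:: true; false], s <- bool_seqs n'] else [:: [::]].

Definition pattern4 (t : bool * bool * bool * bool * bool * bool) (i j : 'I_4) : bool :=
  let: (b01, b02, b03, b12, b13, b23) := t in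
  match nat_of_ord i, nat_of_ord j with
  | 0, 1 => b01 | 0, 2 => b02 | 0, 3 => b03 | 1, 2 => b12 | 1, 3 => b13 | 2, 3 => b23
  | _, _ => false end.

Definition free4 (e : rel 'I_4) :=
  all (fun i => all (fun j => all (fun k => ~~ (e i j && e j k)) ord4) ord4) ord4.

(* Every predicate on 'I_4 is [nth false s] for some [s] in [bool_seqs 4]. *)
Definition connected4 (e : rel 'I_4) :=
  all (fun s => let P i := nth false s (nat_of_ord i) in
         all (fun i => all (fun j => e i j ==> (P i == P j)) ord4) ord4 ==>
         all (fun i => P i == P o0) ord4) (bool_seqs 4).

(* The star out of 0, the star into 3, the square, and the five paths. *)
Definition rank4_patterns : seq (bool * bool * bool * bool * bool * bool) :=
  [:: (true, true, true, false, false, false);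
      (false, false, true, false, true, true);
      (false, true, true, true, true, false);
      (false, true, true, false, true, false);
      (false, false, true, true, true, false);
      (false, true, false, true, true, false);
      (false, true, true, true, false, false);
      (true, false, true, false, false, true)].

Lemma mem_rank4_patterns t :
  free4 (pattern4 t) -> connected4 (pattern4 t) -> t \in rank4_patterns.
Proof. by case: t => [[[[[[] []] []] []] []] []]. Qed.

Section Rank4.
Variable R : realType.

Lemma free4_support (N : qn_data R 4) (e : rel 'I_4) :
  (forall i j, (0 < qdim N i j)%N = e i j) ->
  upper_triangular N -> composition_free N -> free4 e.
Proof.
move=> Ne Nup Nfree; apply/allP => i _; apply/allP => j _; apply/allP => k _.
apply/negP => /andP[]; rewrite -!Ne => Pij Pjk.
have lt_pos a c : (0 < qdim N a c)%N -> (a < c)%N by apply: contraLR => /Nup ->.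
exact: Nfree (lt_pos _ _ Pij) (lt_pos _ _ Pjk) Pij Pjk.
Qed.

Lemma connected4_support (N : qn_data R 4) (e : rel 'I_4) :
  (forall i j, (0 < qdim N i j)%N = e i j) -> connected N -> connected4 e.
Proof.
move=> Ne Nconn; apply/allP => s _; apply/implyP => /allP closed.
apply/allP => i _; apply/eqP; apply: (Nconn (fun x => nth false s x)) => a c.
rewrite Ne => eac.
by move: (closed a (mem_ord4 a)) => /allP/(_ c (mem_ord4 c)); rewrite eac => /eqP.
Qed.

Lemma rank4_support_pattern (N : qn_data R 4) :
  upper_triangular N -> composition_free N -> connected N ->
  exists2 t, t \in rank4_patterns & forall i j, (0 < qdim N i j)%N = pattern4 t i j.
Proof.
move=> Nup Nfree Nconn.
pose t := (0 < qdim N o0 o1, 0 < qdim N o0 o2, 0 < qdim N o0 o3,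
           0 < qdim N o1 o2, 0 < qdim N o1 o3, 0 < qdim N o2 o3)%N.
have Nt : forall i j, (0 < qdim N i j)%N = pattern4 t i j.
  by o4; o4; first [reflexivity | rewrite Nup].
exists t => //; apply: mem_rank4_patterns.
  exact: free4_support Nt Nup Nfree.
exact: connected4_support Nt Nconn.
Qed.

(* The block dimensions of the model are read off N, so they agree with those
   of N on the model's blocks; the other blocks of N vanish by the pattern.
   Every renumbering used is an involution, hence its own inverse. *)
Ltac renumber l Nt :=
  apply: (zero_products_equiv (sigma := perm4 l)) => //;
  [ by exists (perm4 l); o4
  | o4; o4; first [reflexivity | by apply: (support_dim0 Nt)]
  | by o4; o4; rewrite Nt ].

Lemma rank4_classification (N : qn_data R 4) :
  upper_triangular N -> composition_free N -> zero_products N -> connected N ->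
  exists d1 d2 d3 d4 : nat,
    [/\ (0 < d1)%N, (0 < d2)%N, (0 < d3)%N & (0 < d4)%N] /\
    (qn_equiv N (model_i R d1 d2 d3) \/
     qn_equiv N (qn_dual (model_i R d1 d2 d3)) \/
     qn_equiv N (model_ii R d1 d2 d3) \/
     qn_equiv N (qn_dual (model_ii R d1 d2 d3)) \/
     qn_equiv N (model_iii R d1 d2 d3 d4) \/
     qn_equiv N (qn_dual (model_iii R d1 d2 d3 d4))).
Proof.
move=> Nup Nfree N0 Nconn; have [t] := rank4_support_pattern Nup Nfree Nconn.
rewrite !inE.
case/orP=> [/eqP-> Nt|].
  exists (qdim N o0 o1), (qdim N o0 o2), (qdim N o0 o3), 1%N.
  by split; [split; rewrite ?Nt | left; renumber [:: 0; 1; 2; 3] Nt].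
case/orP=> [/eqP-> Nt|].
  exists (qdim N o2 o3), (qdim N o1 o3), (qdim N o0 o3), 1%N.
  by split; [split; rewrite ?Nt | right; left; renumber [:: 0; 1; 2; 3] Nt].
case/orP=> [/eqP-> Nt|].
  exists (qdim N o0 o2), (qdim N o0 o3), (qdim N o1 o2), (qdim N o1 o3).
  by split; [split; rewrite ?Nt | do 4 right; left; renumber [:: 0; 1; 2; 3] Nt].
case/orP=> [/eqP-> Nt|].
  exists (qdim N o0 o2), (qdim N o0 o3), (qdim N o1 o3), 1%N.
  by split; [split; rewrite ?Nt | do 2 right; left; renumber [:: 0; 1; 2; 3] Nt].
case/orP=> [/eqP-> Nt|].
  exists (qdim N o1 o2), (qdim N o1 o3), (qdim N o0 o3), 1%N.
  by split; [split; rewrite ?Nt | do 2 right; left; renumber [:: 1; 0; 2; 3] Nt].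
case/orP=> [/eqP-> Nt|].
  exists (qdim N o1 o3), (qdim N o1 o2), (qdim N o0 o2), 1%N.
  by split; [split; rewrite ?Nt | do 2 right; left; renumber [:: 1; 0; 3; 2] Nt].
case/orP=> [/eqP-> Nt|].
  exists (qdim N o0 o3), (qdim N o0 o2), (qdim N o1 o2), 1%N.
  by split; [split; rewrite ?Nt | do 2 right; left; renumber [:: 0; 1; 3; 2] Nt].
move=> /eqP-> Nt; exists (qdim N o0 o1), (qdim N o0 o3), (qdim N o2 o3), 1%N.
by split; [split; rewrite ?Nt | do 2 right; left; renumber [:: 0; 2; 1; 3] Nt].
Qed.

Lemma model_i_props d1 d2 d3 : (0 < d1)%N -> (0 < d2)%N -> (0 < d3)%N ->
  is_clifford_Nil (model_i R d1 d2 d3) /\ indecomposable (model_i R d1 d2 d3) /\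
  NI_is (model_i R d1 d2 d3) 1.
Proof.
move=> d1_gt0 d2_gt0 d3_gt0; apply: zero_products_props.
- by o4; o4.
- by o4; o4; o4.
- by [].
- move=> P P_closed; have e01 := P_closed o0 o1 d1_gt0.
  have e02 := P_closed o0 o2 d2_gt0; have e03 := P_closed o0 o3 d3_gt0.
  by o4; o4; congruence.
- by exists o0, o1.
Qed.

Lemma model_ii_props d1 d2 d3 : (0 < d1)%N -> (0 < d2)%N -> (0 < d3)%N ->
  is_clifford_Nil (model_ii R d1 d2 d3) /\ indecomposable (model_ii R d1 d2 d3) /\
  NI_is (model_ii R d1 d2 d3) 1.
Proof.
move=> d1_gt0 d2_gt0 d3_gt0; apply: zero_products_props.
- by o4; o4.
- by o4; o4; o4.
- by [].
- move=> P P_closed; have e02 := P_closed o0 o2 d1_gt0.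
  have e03 := P_closed o0 o3 d2_gt0; have e13 := P_closed o1 o3 d3_gt0.
  by o4; o4; congruence.
- by exists o0, o2.
Qed.

Lemma model_iii_props d1 d2 d3 d4 :
  (0 < d1)%N -> (0 < d2)%N -> (0 < d3)%N -> (0 < d4)%N ->
  is_clifford_Nil (model_iii R d1 d2 d3 d4) /\
  indecomposable (model_iii R d1 d2 d3 d4) /\ NI_is (model_iii R d1 d2 d3 d4) 1.
Proof.
move=> d1_gt0 d2_gt0 _ d4_gt0; apply: zero_products_props.
- by o4; o4.
- by o4; o4; o4.
- by [].
- move=> P P_closed; have e02 := P_closed o0 o2 d1_gt0.
  have e03 := P_closed o0 o3 d2_gt0; have e13 := P_closed o1 o3 d4_gt0.
  by o4; o4; congruence.
- by exists o0, o2.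
Qed.

End Rank4.

Theorem theorem1 (R : realType) :
  (forall N : qn_data R 4,
     is_clifford_Nil N -> indecomposable N -> NI_is N 1 ->
     exists d1 d2 d3 d4 : nat,
       [/\ (0 < d1)%N, (0 < d2)%N, (0 < d3)%N & (0 < d4)%N] /\
       (qn_equiv N (model_i R d1 d2 d3) \/
        qn_equiv N (qn_dual (model_i R d1 d2 d3)) \/
        qn_equiv N (model_ii R d1 d2 d3) \/
        qn_equiv N (qn_dual (model_ii R d1 d2 d3)) \/
        qn_equiv N (model_iii R d1 d2 d3 d4) \/
        qn_equiv N (qn_dual (model_iii R d1 d2 d3 d4)))) /\
  (forall d1 d2 d3 d4 : nat,
     (0 < d1)%N -> (0 < d2)%N -> (0 < d3)%N -> (0 < d4)%N ->
     [/\ is_clifford_Nil (model_i R d1 d2 d3) /\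
           indecomposable (model_i R d1 d2 d3) /\ NI_is (model_i R d1 d2 d3) 1,
         is_clifford_Nil (model_ii R d1 d2 d3) /\
           indecomposable (model_ii R d1 d2 d3) /\ NI_is (model_ii R d1 d2 d3) 1 &
         is_clifford_Nil (model_iii R d1 d2 d3 d4) /\
           indecomposable (model_iii R d1 d2 d3 d4) /\
           NI_is (model_iii R d1 d2 d3 d4) 1]).
Proof.
split=> [N [[Nqn _] _] Nindec NI1 | d1 d2 d3 d4 d1_gt0 d2_gt0 d3_gt0 d4_gt0].
  have Nup : upper_triangular N := Nqn.1.
  have [Nfree _] := (NI1P Nup).1 NI1.
  have N0 := quasiNil_zero_products Nqn Nfree.
  exact: rank4_classification Nup Nfree N0 (indecomposable_connected Nup Nfree N0 Nindec).
split; [exact: model_i_props | exact: model_ii_props | exact: model_iii_props].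
Qed.
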